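(* Let $G=(K\cup I,E)$ be a split graph and $(V,\mathcal{F})$ the split graph vertex shelling antimatroid defined on $G$. Let $i\in I$. Then every $i$-feasible set $F$ satisfies $\operatorname{fos}(i)\subseteq F$.
   Context: A split graph $G=(K\cup I,E)$ is a finite simple graph whose vertex set $V=K\cup I$ comes with a fixed partition into a clique $K$ and an independent set $I$. We write $u\sim v$ for adjacency, and for $F\subseteq V$, $N(F)$ is the set of vertices of $V\setminus F$ adjacent to some vertex of $F$; $N(v)=N(\{v\})$. A vertex is simplicial if its neighbours induce a clique. The split graph vertex shelling antimatroid of $G$ is $(V,\mathcal{F})$ where $F\subseteq V$ is feasible iff there is an ordering $f_1,\dots,f_{|F|}$ of $F$ such that each $f_j$ is simplicial in $G$ minus $\{f_1,\dots,f_{j-1}\}$ (the empty set is feasible). For $i\in I$, a feasible set $F$ is $i$-feasible if $i\in N(F)$. The forced set of $i\in I$ is $\operatorname{fos}(i)=\{k\in K: k\not\sim i\}\cup\{i'\in I: N(i')\not\subseteq N(i)\}$. *)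

From mathcomp Require Import all_boot.
Set Implicit Arguments. Unset Strict Implicit. Unset Printing Implicit Defensive.

Section SplitGraph.
Variable T : finType.

Definition simple_graph (e : rel T) : Prop :=
  symmetric e /\ irreflexive e.

Definition split_graph (e : rel T) (K I : {set T}) : Prop :=
  [/\ simple_graph e,
      K :|: I = setT, K :&: I = set0,
      {in K &, forall x y, x != y -> e x y} &
      {in I &, forall x y, ~~ e x y}].

Definition nbhd (e : rel T) (F : {set T}) : {set T} :=
  [set v | (v \notin F) && [exists u in F, e u v]].

Definition simplicial_in (e : rel T) (S : {set T}) (v : T) : bool :=
  (v \notin S) &&
  [forall x, forall y,
     [&& x \notin S, y \notin S, e v x, e v y & x != y] ==> e x y].

Fixpoint shelling_from (e : rel T) (S : {set T}) (s : seq T) : bool :=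
  if s is x :: s' then simplicial_in e S x && shelling_from e (x |: S) s'
  else true.

Definition feasible (e : rel T) (F : {set T}) : Prop :=
  exists s : seq T, shelling_from e set0 s /\ [set x in s] = F.

Definition i_feasible (e : rel T) (i : T) (F : {set T}) : Prop :=
  feasible e F /\ i \in nbhd e F.

Definition fos (e : rel T) (K I : {set T}) (i : T) : {set T} :=
  [set k in K | ~~ e k i] :|:
  [set i' in I | ~~ (nbhd e [set i'] \subset nbhd e [set i])].

End SplitGraph.

(* Let u be a vertex of the feasible set F adjacent to i; as I is independent,
   u lies in K.  When u is shelled, i is still present and u is simplicial, so
   every clique vertex k still present is adjacent to i: all k in K with k not
   adjacent to i are shelled before u.  If i' in I has a neighbour k outside
   N(i), then k is such a vertex; when k is shelled, u is still present, and
   were i' never shelled, k simplicial would force u ~ i', and then u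
   simplicial would force i' ~ i, contradicting the independence of I. *)

From mathcomp Require Import all_boot.

Set Implicit Arguments. Unset Strict Implicit. Unset Printing Implicit Defensive.

Section Shelling.
Variables (T : finType) (e : rel T).

Lemma shelling_cat (S : {set T}) (s1 s2 : seq T) :
  shelling_from e S (s1 ++ s2) =
  shelling_from e S s1 && shelling_from e (S :|: [set x in s1]) s2.
Proof.
elim: s1 S => [|x s1 IH] S /=.
  by congr shelling_from; apply/setP=> y; rewrite !inE orbF.
rewrite IH andbA; congr (_ && shelling_from _ _ _).
by apply/setP=> y; rewrite !inE orbA (orbC (y == x)).
Qed.

Lemma simplicial_neighbours_adj (S : {set T}) (v x y : T) :
  simplicial_in e S v -> x \notin S -> y \notin S -> e v x -> e v y ->
  x != y -> e x y.
Proof.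
move=> /andP[_ /forallP simpl_v] xS yS evx evy xy.
by have /forallP/(_ y) := simpl_v x; rewrite xS yS evx evy xy.
Qed.

Definition shelled_before (s : seq T) (x : T) : {set T} :=
  [set y in take (index x s) s].

Lemma shelled_before_sub (s : seq T) (x y : T) :
  y \in shelled_before s x -> y \in s.
Proof. by rewrite inE => /mem_take. Qed.

Lemma shelled_before_asym (s : seq T) (x y : T) :
  y \in shelled_before s x -> x \notin shelled_before s y.
Proof.
rewrite !inE => /index_ltn yx; apply/negP => /index_ltn xy.
by have := ltn_trans yx xy; rewrite ltnn.
Qed.

Lemma shelling_simplicial (s : seq T) (x : T) :
  shelling_from e set0 s -> x \in s ->
  simplicial_in e (shelled_before s x) x.
Proof.
move=> + xs; rewrite -{1}(cat_take_drop (index x s) s) shelling_cat => /andP[_].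
by rewrite (drop_nth x) ?index_mem // nth_index //= set0U => /andP[].
Qed.

End Shelling.

Lemma nbhd1 (T : finType) (e : rel T) (u v : T) :
  (v \in nbhd e [set u]) = (v != u) && e u v.
Proof.
rewrite inE in_set1; congr (_ && _); apply/existsP/idP => [[w]|euv].
  by rewrite in_set1 => /andP[/eqP ->].
by exists u; rewrite in_set1 eqxx.
Qed.

Section SplitShelling.
Variables (T : finType) (e : rel T) (K I : {set T}).
Hypothesis splitG : split_graph e K I.

Lemma split_sym : symmetric e.
Proof. by case: splitG => -[]. Qed.

Lemma split_neq (x y : T) : x \in K -> y \in I -> x != y.
Proof.
case: splitG => _ _ KI _ _ xK yI; apply: contraTneq yI => <-.
by apply/negP => xI; have := in_set0 x; rewrite -KI inE xK xI.
Qed.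

Lemma split_neighbour_I (x y : T) : x \in I -> e x y -> y \in K.
Proof.
case: splitG => _ KUI _ _ Iind xI exy.
have : y \in K :|: I by rewrite KUI inE.
by rewrite inE => /orP[// | yI]; move: (Iind x y xI yI); rewrite exy.
Qed.

Variables (s : seq T) (i u : T).
Hypotheses (shs : shelling_from e set0 s) (iI : i \in I) (i_notin_s : i \notin s)
  (us : u \in s) (eui : e u i).

Lemma i_notin_shelled_before (x : T) : i \notin shelled_before s x.
Proof. by apply: contra i_notin_s; apply: shelled_before_sub. Qed.

Lemma shelled_neighbour_in_K : u \in K.
Proof. by apply: split_neighbour_I iI _; rewrite split_sym. Qed.

Lemma nonneighbour_shelled_before (k : T) :
  k \in K -> ~~ e k i -> k \in shelled_before s u.
Proof.
case: (splitG) => _ _ _ Kcl _ kK nki.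
have uk : u != k by apply: contraNneq nki => <-.
apply: contraNT nki => k_after.
have euk : e u k by apply: Kcl; rewrite ?shelled_neighbour_in_K.
apply: simplicial_neighbours_adj (shelling_simplicial shs us) k_after _ euk eui _.
  exact: i_notin_shelled_before.
exact: split_neq.
Qed.

Lemma extra_neighbour_I_vertex_shelled (j : T) :
  j \in I -> ~~ (nbhd e [set j] \subset nbhd e [set i]) -> j \in s.
Proof.
case: (splitG) => _ _ _ Kcl Iind jI /subsetPn[k].
rewrite !nbhd1 => /andP[_ ejk] /nandP nik.
have kK : k \in K := split_neighbour_I jI ejk.
have nki : ~~ e k i.
  case: nik => [/negPn | ]; last by rewrite split_sym.
  by rewrite (negbTE (split_neq kK iI)).
have kb := nonneighbour_shelled_before kK nki.
apply: contraT => j_notin_s.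
have ku : k != u by apply: contraNneq nki => ->.
have euj : e u j.
  apply: simplicial_neighbours_adj (shelling_simplicial shs (shelled_before_sub kb)) _ _ _ _ _.
  - exact: shelled_before_asym.
  - by apply: contra j_notin_s; apply: shelled_before_sub.
  - by apply: Kcl; rewrite ?shelled_neighbour_in_K.
  - by rewrite split_sym.
  - exact: split_neq shelled_neighbour_in_K jI.
have ji : j != i by apply: contraNneq nki => <-; rewrite split_sym.
have := Iind j i jI iI; rewrite (simplicial_neighbours_adj (shelling_simplicial shs us)) //.
  by apply: contra j_notin_s; apply: shelled_before_sub.
exact: i_notin_shelled_before.
Qed.

End SplitShelling.

Theorem mainTheorem7 (T : finType) (e : rel T) (K I : {set T}) (i : T)
    (F : {set T}) :
  split_graph e K I -> i \in I -> i_feasible e i F -> fos e K I i \subset F.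
Proof.
move=> splitG iI [[s [shs <-]]].
rewrite inE => /andP[]; rewrite inE => i_notin_s /existsP[u /andP[]].
rewrite inE => us eui.
apply/subsetP => x; rewrite !inE => /orP[/andP[xK nxi] | /andP[xI x_extra]].
  apply: shelled_before_sub.
  exact: (nonneighbour_shelled_before splitG shs iI i_notin_s us eui xK nxi).
exact: (extra_neighbour_I_vertex_shelled splitG shs iI i_notin_s us eui xI
  x_extra).
Qed.
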